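(* Let $X$ be an infinite compact metrizable space and $h\colon X\to X$ a minimal homeomorphism. (1) If $(X,h)$ has the topological small boundary property, then for every compact $F\subset X$ there is an open set $U\subset X$ with $F\subset U$ and $\partial U$ topologically $h$-small. (2) $(X,h)$ has the topological small boundary property if and only if for every $x\in X$ and every open neighborhood $U$ of $x$ there is an open neighborhood $V$ of $x$ with $V\subset\overline{V}\subset U$ and $\partial V$ topologically $h$-small.
   Context: $\partial A$ is the boundary of $A$. A closed set $F\subset X$ is topologically $h$-small if there is $m\in\mathbb{Z}_{+}$ such that whenever $d(0),\dots,d(m)$ are $m+1$ distinct integers, $h^{d(0)}(F)\cap\cdots\cap h^{d(m)}(F)=\varnothing$. $(X,h)$ has the topological small boundary property if whenever $F,K\subset X$ are disjoint compact sets, there exist open sets $U,V\subset X$ with $F\subset U$, $K\subset V$, $\overline{U}\cap\overline{V}=\varnothing$ and $\partial U$ topologically $h$-small. *)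

From HB Require Import structures.
From mathcomp Require Import all_boot all_order all_algebra.
From mathcomp Require Import all_classical all_reals all_analysis.
Set Implicit Arguments. Unset Strict Implicit. Unset Printing Implicit Defensive.
Import Order.TTheory GRing.Theory Num.Theory.
Local Open Scope classical_set_scope.

Definition boundary {T : topologicalType} (A : set T) : set T :=
  closure A `\` interior A.

(* h^d for d : int, given h with inverse g (h^-1 = g) *)
Definition zpow {T : Type} (h g : T -> T) (d : int) : T -> T :=
  match d with
  | Posz n => iter n h
  | Negz n => iter n.+1 g
  end.

Definition homeomorphism {T : topologicalType} (h g : T -> T) : Prop :=
  continuous h /\ continuous g /\ cancel h g /\ cancel g h.

Definition minimal_homeo {T : topologicalType} (h : T -> T) : Prop :=
  forall Y : set T, closed Y -> h @` Y = Y -> Y = set0 \/ Y = setT.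

Definition top_small {T : topologicalType} (h g : T -> T) (F : set T) : Prop :=
  closed F /\
  exists m : nat, forall d : 'I_m.+1 -> int, injective d ->
    \bigcap_(i in [set: 'I_m.+1]) (zpow h g (d i) @` F) = set0.

Definition tsbp {T : topologicalType} (h g : T -> T) : Prop :=
  forall F K : set T, compact F -> compact K -> F `&` K = set0 ->
    exists U V : set T, [/\ open U /\ open V, F `<=` U, K `<=` V,
      closure U `&` closure V = set0 & top_small h g (boundary U)].

From HB Require Import structures.
From mathcomp Require Import all_boot all_order all_algebra.
From mathcomp Require Import all_classical all_reals all_analysis.
Import Order.TTheory GRing.Theory Num.Theory.
Local Open Scope classical_set_scope.

(* A closed set B is topologically h-small iff some m bounds the number of
   translates h^d(B) containing any given point.  Such bounds add up under
   finite unions, and the boundary of a union lies in the union of the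
   boundaries, so the open sets with small boundary whose closure misses a
   closed set K are closed under finite unions.  Given neighbourhood bases of
   sets with small boundary, compactness therefore separates a compact F from
   K by such a set U, and then separates K from closure U in the same way.
   Conversely, the small boundary property applied to {x} and the complement
   of U yields those neighbourhood bases. *)

Lemma compact_sub_setU_closed (T : topologicalType) (P : set (set T)) (K : set T) :
  compact K -> P set0 -> (forall A B, P A -> P B -> P (A `|` B)) ->
  (forall x, K x -> exists2 U, P U & nbhs x U) ->
  exists2 U, P U & K `<=` U.
Proof.
move=> /compact_near_coveringP cK P0 PU locK.
pose F := filter_from P (fun U => [set V | P V /\ U `<=` V]).
have FF : Filter F.
  apply: filter_from_filter; first by exists set0.
  move=> A B PA PB; exists (A `|` B); first exact: PU.
  by move=> V [PV ABV]; split; split => // x Bx; apply: ABV; [left|right].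
have [U0 PU0 U0K] : F [set V | K `<=` V].
  apply: (cK _ F (fun V x => V x) FF) => x Kx.
  have [U PU0 Ux] := locK x Kx.
  exists (U, [set V | P V /\ U `<=` V]) => /=; first by split => //; exists U.
  by move=> [y V] [/= Uy [_ UV]]; apply: UV.
by exists U0 => //; apply: U0K; split.
Qed.

Section Boundary.
Context {T : topologicalType}.

Lemma boundary_closed (A : set T) : closed (boundary A).
Proof.
rewrite /boundary setDE; apply: closedI; first exact: closed_closure.
exact/open_closedC/open_interior.
Qed.

Lemma boundaryU (A B : set T) :
  boundary (A `|` B) `<=` boundary A `|` boundary B.
Proof.
move=> x []; rewrite closureU => -[cA|cB] nI.
- by left; split => // iA; apply: nI; apply: interiorU; left.
- by right; split => // iB; apply: nI; apply: interiorU; right.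
Qed.

End Boundary.

Section SmallSets.
Variables (T : topologicalType) (h g : T -> T).

Definition overlap_le (B : set T) (m : nat) :=
  forall y (s : seq int), uniq s ->
    (forall d, d \in s -> (zpow h g d @` B) y) -> (size s <= m)%N.

Definition bounded_overlap (B : set T) := exists m, overlap_le B m.

Lemma top_smallP (B : set T) :
  top_small h g B <-> closed B /\ bounded_overlap B.
Proof.
split=> [[cB [m Hm]]|[cB [m Hm]]]; split => //; exists m.
- move=> y s us Hs; rewrite leqNgt; apply/negP => Hsz.
  have s_i (i : 'I_m.+1) : (i < size s)%N by exact: leq_trans (ltn_ord i) Hsz.
  pose d (i : 'I_m.+1) := nth 0%R s i.
  have dinj : injective d.
    by move=> i j /eqP; rewrite /d nth_uniq // => /eqP/val_inj.
  have := Hm d dinj; rewrite -subset0 => /(_ y); apply => i _.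
  exact/Hs/mem_nth.
- move=> d dinj; apply/seteqP; split => // y Hy.
  have := Hm y (map d (enum 'I_m.+1)).
  rewrite map_inj_uniq // enum_uniq size_map size_enum_ord ltnn.
  move=> /(_ isT) contra; suff : false by [].
  by apply: contra => ? /mapP[i _ ->]; exact: Hy.
Qed.

Lemma bounded_overlap0 : bounded_overlap set0.
Proof. by exists 0%N => y [|d s] //= _ /(_ d (mem_head _ _)) [? []]. Qed.

Lemma bounded_overlapS {A B : set T} :
  B `<=` A -> bounded_overlap A -> bounded_overlap B.
Proof.
move=> BA [m HA]; exists m => y s us Hs; apply: (HA y s us) => d ds.
by have [x Bx <-] := Hs d ds; exists x => //; apply: BA.
Qed.

Lemma bounded_overlapU {A B : set T} :
  bounded_overlap A -> bounded_overlap B -> bounded_overlap (A `|` B).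
Proof.
move=> [ma HA] [mb HB]; exists (ma + mb)%N => y s us Hs.
pose inA (d : int) := `[< (zpow h g d @` A) y >].
rewrite -(count_predC inA s) -!size_filter; apply: leq_add.
- apply: (HA y); first exact: filter_uniq.
  by move=> d; rewrite mem_filter => /andP[/asboolP].
- apply: (HB y); first exact: filter_uniq.
  move=> d; rewrite mem_filter => /andP[/= /asboolPn nA ds].
  have [x [Ax|Bx] Ex] := Hs d ds; last by exists x.
  by exfalso; apply: nA; exists x.
Qed.

Lemma top_small_boundaryP (A : set T) :
  top_small h g (boundary A) <-> bounded_overlap (boundary A).
Proof. by rewrite top_smallP; split=> [[]//|sA]; split=> //; exact: boundary_closed. Qed.

Definition small_boundary_nbhs_basis :=
  forall (x : T) (U : set T), open U -> U x ->
    exists V : set T, [/\ open V, V x, V `<=` closure V, closure V `<=` U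
                        & top_small h g (boundary V)].

Lemma small_boundary_separation {F K : set T} :
  small_boundary_nbhs_basis -> compact F -> closed K -> F `&` K = set0 ->
  exists U, [/\ open U, F `<=` U, closure U `&` K = set0
               & top_small h g (boundary U)].
Proof.
move=> basis cF cK FK.
pose good U := [/\ open U, closure U `&` K = set0
                   & bounded_overlap (boundary U)].
have [U [oU UK sU] FU] : exists2 U, good U & F `<=` U.
  apply: compact_sub_setU_closed => //.
  - split; [exact: open0 | by rewrite closure0 set0I |].
    by apply: (bounded_overlapS _ bounded_overlap0); rewrite /boundary closure0 set0D.
  - move=> A B [oA cA sA] [oB cB sB]; split; first exact: openU.
      by rewrite closureU setIUl cA cB setU0.
    exact: bounded_overlapS (boundaryU A B) (bounded_overlapU sA sB).
  - move=> x Fx; have nKx : (~` K) x by move=> Kx; rewrite -[False]/(set0 x) -FK.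
    have [V [oV Vx _ cVK /top_small_boundaryP sV]] :=
      basis x (~` K) (closed_openC cK) nKx.
    exists V; last exact: open_nbhs_nbhs.
    by split => //; apply/seteqP; split => // y [/cVK].
by exists U; split => //; apply/top_small_boundaryP.
Qed.

Lemma tsbp_small_boundary_nbhs_basis :
  compact [set: T] -> tsbp h g -> small_boundary_nbhs_basis.
Proof.
move=> cT ts x U oU Ux.
have cUc : compact (~` U).
  by rewrite -(setTI (~` U)); apply: compact_closedI => //; exact: open_closedC.
have xU : [set x] `&` ~` U = set0 by apply/seteqP; split => // y [->].
have [W [V [[oW _] xW UV cWV sW]]] := ts _ _ (@compact_set1 _ x) cUc xU.
exists W; split => //; [exact: xW | exact: subset_closure |].
move=> y cWy; apply: contrapT => nUy.
have : (closure W `&` closure V) y by split => //; exact/subset_closure/UV.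
by rewrite cWV.
Qed.

Lemma small_boundary_nbhs_basis_tsbp :
  hausdorff_space T -> small_boundary_nbhs_basis -> tsbp h g.
Proof.
move=> hT basis F K cF cK FK.
have [U [oU FU cUK sU]] :=
  small_boundary_separation basis cF (compact_closed hT cK) FK.
have KcU : K `&` closure U = set0 by rewrite setIC.
have [V [oV KV cVU _]] :=
  small_boundary_separation basis cK (@closed_closure _ U) KcU.
exists U, V; split => //.
by rewrite setIC.
Qed.

End SmallSets.

Theorem lemma4p3 (R : realType) (X : pseudoMetricType R) (h g : X -> X) :
  hausdorff_space X -> compact [set: X] -> ~ finite_set [set: X] ->
  homeomorphism h g -> minimal_homeo h ->
  (tsbp h g ->
     forall F : set X, compact F ->
       exists U : set X, [/\ open U, F `<=` U & top_small h g (boundary U)])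
  /\
  (tsbp h g <->
     forall (x : X) (U : set X), open U -> U x ->
       exists V : set X, [/\ open V, V x, V `<=` closure V, closure V `<=` U
                           & top_small h g (boundary V)]).
Proof.
move=> hX cX _ _ _; split.
  move=> ts F cF.
  have [U [V [[oU _] FU _ _ sU]]] := ts F set0 cF compact0 (setI0 F).
  by exists U.
split; first exact: tsbp_small_boundary_nbhs_basis.
exact: small_boundary_nbhs_basis_tsbp.
Qed.
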